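(* Let $f:\mathbb{R}^n\to\mathbb{R}$ be differentiable, $\gamma\in\mathbb{R}$, $\mathcal{X}=\{x:\sum_m x_m=\gamma\}$, $L_1,\dots,L_n>0$, and $\|d\|_L=\sum_m\sqrt{L_m}|d_m|$. Assume there is $L_L>0$ with $f(x+d)\le f(x)+\nabla f(x)^\top d+\frac{L_L}{2}\|d\|_L^2$ for all $x\in\mathcal{X}$ and all $d$ with $\sum_m d_m=0$. Let $f^*=\inf_{\mathcal{X}}f$ and assume there is $\mu_L>0$ with $\frac12\mathcal{D}_L(x,L_L)\ge\mu_L(f(x)-f^* )$ for all $x\in\mathcal{X}$, where $\mathcal{D}_L(x,L)=-2L\min_{d:\sum_m d_m=0}\{\nabla f(x)^\top d+\frac{L}{2}\|d\|_L^2\}$. Let $x^0\in\mathcal{X}$ and define $x^{k+1}=x^k+d^k$, where $(i_k,j_k)$ maximizes $\frac{\nabla_if(x^k)-\nabla_jf(x^k)}{\sqrt{L_i}+\sqrt{L_j}}$ over ordered pairs $i\neq j$, $\delta^k=\frac{\nabla_{i_k}f(x^k)-\nabla_{j_k}f(x^k)}{L_L(\sqrt{L_{i_k}}+\sqrt{L_{j_k}})^2}$, $d^k_{i_k}=-\delta^k$, $d^k_{j_k}=\delta^k$ and $d^k_m=0$ otherwise. Then for all $k\ge0$, \[ f(x^k)-f^*\le\Big(1-\frac{\mu_L}{L_L}\Big)^k\big(f(x^0)-f^*\big). \] *)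

(* Vectors of R^n are row vectors 'rV[R]_n,
   the m-th coordinate of x is x ord0 m. *)
From HB Require Import structures.
From mathcomp Require Import all_boot all_order all_algebra.
From mathcomp Require Import all_classical all_reals all_analysis.
Import Order.TTheory GRing.Theory Num.Theory numFieldNormedType.Exports.

Set Implicit Arguments.
Unset Strict Implicit.
Unset Printing Implicit Defensive.

Local Open Scope classical_set_scope.
Local Open Scope ring_scope.

Section Defs.
Context {R : realType} {n : nat}.

Definition vsum (x : 'rV[R]_n) : R := \sum_(m < n) x ord0 m.

Definition feasible (gamma : R) : set 'rV[R]_n := [set x | vsum x = gamma].

Definition gradi (f : 'rV[R]_n -> R) (x : 'rV[R]_n) (i : 'I_n) : R :=
  'd f x (delta_mx ord0 i).

Definition normL (Lw : 'I_n -> R) (d : 'rV[R]_n) : R :=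
  \sum_(m < n) Num.sqrt (Lw m) * `|d ord0 m|.

Definition DL (f : 'rV[R]_n -> R) (Lw : 'I_n -> R) (x : 'rV[R]_n) (LL : R) : R :=
  - 2 * LL * inf [set ('d f x d + LL / 2 * normL Lw d ^+ 2) | d in [set d | vsum d = 0]].

Definition fstar (f : 'rV[R]_n -> R) (gamma : R) : \bar R :=
  ereal_inf [set (f y)%:E | y in feasible gamma].

Definition pair_ratio (f : 'rV[R]_n -> R) (Lw : 'I_n -> R) (x : 'rV[R]_n) (i j : 'I_n) : R :=
  (gradi f x i - gradi f x j) / (Num.sqrt (Lw i) + Num.sqrt (Lw j)).

Definition step_dir (f : 'rV[R]_n -> R) (Lw : 'I_n -> R) (LL : R) (x : 'rV[R]_n)
  (i j : 'I_n) : 'rV[R]_n :=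
  let delta := (gradi f x i - gradi f x j) /
               (LL * (Num.sqrt (Lw i) + Num.sqrt (Lw j)) ^+ 2) in
  \row_m (if m == i then - delta else if m == j then delta else 0).

End Defs.

(* Write g = grad f(x) and, for the greedy pair (i, j) maximising
   (g_p - g_q) / (sqrt L_p + sqrt L_q), let r >= 0 be the maximal ratio.
   - Dual-norm bound: maximality separates the intervals
     [g_p - r sqrt L_p, g_p + r sqrt L_p] by a common point t, so for every
     zero-sum direction d we get g^T d = sum_m d_m (g_m - t) >= - r ||d||_L.
     Minimising -r N + L_L/2 N^2 over N then gives D_L(x, L_L) <= r^2.
   - Descent: the greedy step d^k has zero sum (so the iterates stay in X)
     and its quadratic model equals exactly -r^2 / (2 L_L); by smoothness
     f(x^{k+1}) <= f(x^k) - r^2 / (2 L_L).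
   - Combining with the PL bound mu_L (f(x^k) - f^* ) <= D_L / 2 <= r^2 / 2
     gives the contraction e_{k+1} <= (1 - mu_L / L_L) e_k of the gap
     e_k = f(x^k) - f^*, which is finite, and a nonnegative sequence with a
     contraction factor of any sign satisfies e_k <= c^k e_0. *)
From HB Require Import structures.
From mathcomp Require Import all_boot all_order all_algebra.
From mathcomp Require Import all_classical all_reals all_analysis.
From mathcomp Require Import ring lra.
Import Order.TTheory GRing.Theory Num.Theory numFieldNormedType.Exports.
Local Open Scope classical_set_scope.
Local Open Scope ring_scope.

(* A nonnegative sequence contracted by a factor c at every step (c may be
   negative, in which case the sequence is identically zero) decays like c^k. *)
Lemma geometric_decay {R : realDomainType} (e : nat -> R) (c : R) :
  (forall k, 0 <= e k) -> (forall k, e k.+1 <= c * e k) ->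
  forall k, e k <= c ^+ k * e 0%N.
Proof.
move=> e_ge0 contr k.
have [c_ge0 | c_lt0] := lerP 0 c.
  elim: k => [|k IH]; first by rewrite expr0 mul1r.
  by rewrite exprS -mulrA (le_trans (contr k)) // ler_wpM2l.
have e0_eq0 : e 0%N = 0.
  by have := contr 0%N; have := e_ge0 1%N; have := e_ge0 0%N; nra.
rewrite e0_eq0 mulr0; case: k => [|k]; first by rewrite e0_eq0.
by have := contr k; have := e_ge0 k; nra.
Qed.

Lemma quadratic_model_lb {R : realFieldType} (L r N : R) :
  0 < L -> - (r ^+ 2) / (2 * L) <= - (r * N) + L / 2 * N ^+ 2.
Proof.
move=> L_gt0; rewrite ler_pdivrMr ?mulr_gt0 //.
have -> : (- (r * N) + L / 2 * N ^+ 2) * (2 * L) = (L * N - r) ^+ 2 - r ^+ 2.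
  by field.
by have := sqr_ge0 (L * N - r); lra.
Qed.

Section ZeroSumDirections.
Context {R : realType} {n : nat}.

Lemma vsumD (x d : 'rV[R]_n) : vsum (x + d) = vsum x + vsum d.
Proof. by rewrite /vsum -big_split; apply: eq_bigr => m _; rewrite mxE. Qed.

Lemma diff_coordE (f : 'rV[R]_n -> R) (x d : 'rV[R]_n) :
  'd f x d = \sum_(m < n) d ord0 m * gradi f x m.
Proof.
rewrite [in LHS](row_sum_delta d) linear_sum; apply: eq_bigr => m _.
by rewrite linearZ.
Qed.

Lemma separating_point {lo hi : 'I_n -> R} (i0 : 'I_n) :
  (forall p q, lo p <= hi q) ->
  exists t, (forall p, lo p <= t) /\ (forall q, t <= hi q).
Proof.
move=> lo_hi; exists (\big[Num.max/lo i0]_p lo p); split=> [p|q].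
  exact: le_bigmax.
by apply: bigmax_le => // p _; apply: lo_hi.
Qed.

(* Against a zero-sum direction, g may be shifted by any constant t; if every
   g_m is within r s_m of t, the weighted-l1 dual bound follows. *)
Lemma zero_sum_lower_bound (g s : 'I_n -> R) (t r : R) (d : 'rV[R]_n) :
  (forall m, `|g m - t| <= r * s m) -> vsum d = 0 ->
  - (r * \sum_(m < n) s m * `|d ord0 m|) <= \sum_(m < n) d ord0 m * g m.
Proof.
move=> g_near_t d_sum0.
have shift : \sum_(m < n) d ord0 m * g m = \sum_(m < n) d ord0 m * (g m - t).
  under [RHS]eq_bigr do rewrite mulrBr.
  by rewrite sumrB -mulr_suml -/(vsum d) d_sum0 mul0r subr0.
rewrite shift mulr_sumr -sumrN; apply: ler_sum => m _.
have term : `|d ord0 m * (g m - t)| <= `|d ord0 m| * (r * s m).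
  by rewrite normrM ler_wpM2l.
by move: term; rewrite ler_norml [s m * _]mulrC mulrCA => /andP[].
Qed.

End ZeroSumDirections.

Section GreedyStep.
Context {R : realType} {n : nat}.
Variables (f : 'rV[R]_n -> R) (Lw : 'I_n -> R) (LL : R).
Hypotheses (Lw_gt0 : forall m, 0 < Lw m) (LL_gt0 : 0 < LL).

Let sqrtL_gt0 m : 0 < Num.sqrt (Lw m). Proof. by rewrite sqrtr_gt0. Qed.

Definition greedy_pair (x : 'rV[R]_n) (i j : 'I_n) : Prop :=
  i != j /\ forall p q : 'I_n, p != q -> pair_ratio f Lw x p q <= pair_ratio f Lw x i j.

Lemma pair_ratio_swap x (i j : 'I_n) : pair_ratio f Lw x j i = - pair_ratio f Lw x i j.
Proof. by rewrite /pair_ratio (addrC (Num.sqrt (Lw j))) -mulNr opprB. Qed.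

(* The maximal ratio is nonnegative, since the swapped pair gives its opposite. *)
Lemma greedy_ratio_ge0 {x i j} : greedy_pair x i j -> 0 <= pair_ratio f Lw x i j.
Proof.
move=> [ij ratio_max]; have := ratio_max j i; rewrite eq_sym ij pair_ratio_swap.
by move=> /(_ isT); lra.
Qed.

Lemma greedy_lower_bound {x i j} (d : 'rV[R]_n) :
  greedy_pair x i j -> vsum d = 0 ->
  - (pair_ratio f Lw x i j * normL Lw d) <= 'd f x d.
Proof.
move=> greedy d_sum0; have r_ge0 := greedy_ratio_ge0 greedy.
have [_ ratio_max] := greedy; set r := pair_ratio f Lw x i j in r_ge0 ratio_max *.
set g := gradi f x.
have intervals_meet p q : g p - r * Num.sqrt (Lw p) <= g q + r * Num.sqrt (Lw q).
  have := sqrtL_gt0 p; have := sqrtL_gt0 q.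
  have [-> | pq] := eqVneq p q; first by nra.
  have := ratio_max p q pq; rewrite /pair_ratio -/g ler_pdivrMr ?addr_gt0 //.
  by lra.
have [t [lo_t t_hi]] := separating_point i intervals_meet.
rewrite diff_coordE /normL.
apply: (zero_sum_lower_bound g (fun m => Num.sqrt (Lw m)) t r d _ d_sum0) => m.
rewrite ler_norml; apply/andP; split; [have := t_hi m | have := lo_t m]; lra.
Qed.

Lemma DL_le_ratio_sq x i j :
  greedy_pair x i j -> DL f Lw x LL <= pair_ratio f Lw x i j ^+ 2.
Proof.
move=> greedy; rewrite /DL; set r := pair_ratio f Lw x i j.
set S := [set _ | _ in _].
have model_lb : - (r ^+ 2) / (2 * LL) <= inf S.
  apply: lb_le_inf.
    exists ('d f x 0 + LL / 2 * normL Lw 0 ^+ 2); exists 0 => //.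
    by rewrite /= /vsum big1 // => m _; rewrite mxE.
  move=> _ [d /= d_sum0 <-].
  apply: le_trans (quadratic_model_lb LL r (normL Lw d) LL_gt0) _.
  by rewrite lerD2r greedy_lower_bound.
have -> : r ^+ 2 = - 2 * LL * (- (r ^+ 2) / (2 * LL)).
  by field; rewrite lt0r_neq0.
by rewrite ler_wnM2l // mulr_le0_ge0 ?ltW.
Qed.

Lemma step_dir_sum {x} {i j : 'I_n} (F : 'I_n -> R -> R) :
  i != j -> (forall m, F m 0 = 0) ->
  let delta := (gradi f x i - gradi f x j) /
               (LL * (Num.sqrt (Lw i) + Num.sqrt (Lw j)) ^+ 2) in
  \sum_(m < n) F m (step_dir f Lw LL x i j ord0 m) = F i (- delta) + F j delta.
Proof.
move=> ij F0; rewrite /step_dir.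
rewrite (bigD1 i) //= (bigD1 j) ?(eq_sym j) //= !mxE eqxx.
rewrite eq_sym (negbTE ij) eqxx big1 ?addr0 // => m /andP[mi mj].
by rewrite mxE (negbTE mi) (negbTE mj) F0.
Qed.

Lemma step_dir_vsum0 x {i j : 'I_n} : i != j -> vsum (step_dir f Lw LL x i j) = 0.
Proof. by move=> ij; rewrite /vsum (step_dir_sum (fun _ v => v)) // addNr. Qed.

Lemma step_dir_model {x i j} : greedy_pair x i j ->
  let d := step_dir f Lw LL x i j in
  'd f x d + LL / 2 * normL Lw d ^+ 2 = - (pair_ratio f Lw x i j ^+ 2) / (2 * LL).
Proof.
move=> greedy; have r_ge0 := greedy_ratio_ge0 greedy; have [ij _] := greedy.
rewrite /= diff_coordE (step_dir_sum (fun m v => v * gradi f x m)) //;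
  last by move=> m; rewrite mul0r.
rewrite /normL (step_dir_sum (fun m v => Num.sqrt (Lw m) * `|v|)) //;
  last by move=> m; rewrite normr0 mulr0.
move: r_ge0; rewrite /pair_ratio.
set a := gradi f x i - gradi f x j; set s := Num.sqrt (Lw i) + Num.sqrt (Lw j).
have s_gt0 : 0 < s by rewrite addr_gt0.
move=> r_ge0; have a_ge0 : 0 <= a by move: r_ge0; rewrite pmulr_lge0 // invr_gt0.
have delta_ge0 : 0 <= a / (LL * s ^+ 2).
  by rewrite divr_ge0 // mulr_ge0 ?sqr_ge0 // ltW.
rewrite normrN ger0_norm // -mulrDl -/s.
have -> : - (a / (LL * s ^+ 2)) * gradi f x i + a / (LL * s ^+ 2) * gradi f x j
   = - (a / (LL * s ^+ 2)) * a by rewrite /a; ring.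
by field; rewrite !gt_eqF.
Qed.

Variable gamma : R.
Hypothesis smooth : forall y d : 'rV[R]_n, feasible gamma y -> vsum d = 0 ->
  f (y + d) <= f y + 'd f y d + LL / 2 * normL Lw d ^+ 2.

Lemma feasible_step y i j : feasible gamma y -> i != j ->
  feasible gamma (y + step_dir f Lw LL y i j).
Proof. by rewrite /feasible /= vsumD => -> /step_dir_vsum0 ->; rewrite addr0. Qed.

Lemma greedy_descent {y i j} : feasible gamma y -> greedy_pair y i j ->
  f (y + step_dir f Lw LL y i j) <= f y - pair_ratio f Lw y i j ^+ 2 / (2 * LL).
Proof.
move=> y_feas greedy; have [ij _] := greedy.
apply: le_trans (smooth _ _ y_feas (step_dir_vsum0 y ij)) _.
by rewrite -addrA step_dir_model // mulNr.
Qed.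

Lemma greedy_contraction (muL fs : R) y i j :
  feasible gamma y -> greedy_pair y i j ->
  muL * (f y - fs) <= DL f Lw y LL / 2 ->
  f (y + step_dir f Lw LL y i j) - fs <= (1 - muL / LL) * (f y - fs).
Proof.
move=> y_feas greedy PL; set r := pair_ratio f Lw y i j.
have PL_r : muL * (f y - fs) / LL <= r ^+ 2 / (2 * LL).
  rewrite invfM mulrA ler_pM2r ?invr_gt0 //.
  by apply: le_trans PL _; rewrite ler_pM2r // DL_le_ratio_sq.
have -> : (1 - muL / LL) * (f y - fs) = f y - fs - muL * (f y - fs) / LL.
  by field; rewrite lt0r_neq0.
by have := greedy_descent y_feas greedy; rewrite -/r; lra.
Qed.

End GreedyStep.

Section OptimalValue.
Context {R : realType} {n : nat} {f : 'rV[R]_n -> R} {gamma : R}.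

Lemma fstar_le {y} : feasible gamma y -> (fstar f gamma <= (f y)%:E)%E.
Proof. by move=> y_feas; apply: ereal_inf_lbound; exists y. Qed.

(* Hence a feasible point rules out f^* = +oo, and a PL-type bound with a positive
   constant and a real right-hand side rules out f^* = -oo. *)
Lemma fstar_fin_num {muL b : R} {y} : feasible gamma y -> 0 < muL ->
  (muL%:E * ((f y)%:E - fstar f gamma) <= b%:E)%E -> fstar f gamma \is a fin_num.
Proof.
move=> y_feas mu_gt0; have := fstar_le y_feas.
case: (fstar f gamma) => [fs | | ] //= _.
by rewrite addey // mulry gtr0_sg // mul1e leye_eq.
Qed.

End OptimalValue.

Theorem mainTheorem5 (R : realType) (n : nat) (f : 'rV[R]_n -> R) (gamma : R)
  (Lw : 'I_n -> R) (LL muL : R) (x : nat -> 'rV[R]_n) (i j : nat -> 'I_n) :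
  (forall y : 'rV[R]_n, differentiable f y) ->
  (forall m, 0 < Lw m) ->
  0 < LL ->
  (forall y d : 'rV[R]_n, feasible gamma y -> vsum d = 0 ->
     f (y + d) <= f y + 'd f y d + LL / 2 * normL Lw d ^+ 2) ->
  0 < muL ->
  (forall y : 'rV[R]_n, feasible gamma y ->
     (muL%:E * ((f y)%:E - fstar f gamma) <= (DL f Lw y LL / 2)%:E)%E) ->
  feasible gamma (x 0%N) ->
  (forall k, i k != j k /\
     (forall p q : 'I_n, p != q -> pair_ratio f Lw (x k) p q <= pair_ratio f Lw (x k) (i k) (j k))) ->
  (forall k, x k.+1 = x k + step_dir f Lw LL (x k) (i k) (j k)) ->
  forall k : nat,
    ((f (x k))%:E - fstar f gamma <=
       ((1 - muL / LL) ^+ k)%:E * ((f (x 0%N))%:E - fstar f gamma))%E.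
Proof.
move=> _ Lw_gt0 LL_gt0 smooth mu_gt0 PL x0_feas greedy iterate.
have feas k : feasible gamma (x k).
  by elim: k => // k IH; rewrite iterate; apply: feasible_step => //; exact: (greedy k).1.
have /fineK fstarE := fstar_fin_num x0_feas mu_gt0 (PL _ x0_feas).
set fs := fine (fstar f gamma) in fstarE; rewrite -fstarE.
have gap_ge0 k : 0 <= f (x k) - fs.
  by have := fstar_le (f := f) (feas k); rewrite -fstarE lee_fin subr_ge0.
have contraction k : f (x k.+1) - fs <= (1 - muL / LL) * (f (x k) - fs).
  rewrite iterate; apply: greedy_contraction => //; first exact: smooth.
  by have := PL _ (feas k); rewrite -fstarE -EFinB -EFinM lee_fin.
move=> k; rewrite -!EFinB -EFinM lee_fin.
exact: (geometric_decay (fun k => f (x k) - fs)).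
Qed.
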